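(* Let $G$ be a finite graph, $k$ a positive integer, $c$ a $k$-colouring of $G$, and $u,v\in V(G)$ with $|C_{c,u}|\ge 2$ and $|C_{c,v}|\ge 2$. Let $c_u\in C_{c,u}$ and $c_v\in C_{c,v}$. If $uv\notin E(G)$, then $|C_{c_u,v}|\ge 2$ and $|C_{c_v,u}|\ge 2$.
   Context: A $k$-colouring of $G$ is a map $c:V(G)\to\{1,\dots,k\}$ with $c(x)\neq c(y)$ for every edge $xy$. For a $k$-colouring $c$ and $u\in V(G)$, $C_{c,u}$ denotes the set of $k$-colourings of $G$ that differ from $c$ exactly at the vertex $u$. *)

From mathcomp Require Import all_boot.
Set Implicit Arguments. Unset Strict Implicit. Unset Printing Implicit Defensive.

(* A finite simple graph: vertex set a finType T, adjacency e : rel T that is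
   symmetric and irreflexive. Colours {1,...,k} are represented by 'I_k. *)
Definition simple_graph (T : finType) (e : rel T) : Prop :=
  symmetric e /\ irreflexive e.

Definition proper_colouring (T : finType) (e : rel T) (k : nat)
  (c : {ffun T -> 'I_k}) : bool :=
  [forall x, forall y, e x y ==> (c x != c y)].

(* C_{c,u}: the k-colourings of G differing from c exactly at u. *)
Definition recol_at (T : finType) (e : rel T) (k : nat)
  (c : {ffun T -> 'I_k}) (u : T) : {set {ffun T -> 'I_k}} :=
  [set d | [&& proper_colouring e d, d u != c u &
             [forall x, (x != u) ==> (d x == c x)]]].

From mathcomp Require Import all_boot.

Set Implicit Arguments.
Unset Strict Implicit.
Unset Printing Implicit Defensive.

(* If u = v, the proper colourings agreeing with c off u are the same as those
   agreeing with c_u off u; C_{c,u} and C_{c_u,u} are this set minus c and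
   minus c_u respectively, so they have the same size.  If u <> v, recolouring
   u with c_u(u) maps C_{c,v} injectively into C_{c_u,v}: as u and v are not
   adjacent, the new colour of u only has to avoid colours of c_u. *)

Section Recolouring.

Variables (T : finType) (e : rel T) (k : nat).
Implicit Types c d : {ffun T -> 'I_k}.

Lemma proper_colouringP c :
  reflect (forall x y, e x y -> c x != c y) (proper_colouring e c).
Proof.
apply: (iffP forallP) => [cP x y exy | cP x].
  by have /forallP/(_ y)/implyP := cP x; apply.
by apply/forallP => y; apply/implyP; apply: cP.
Qed.

Lemma recol_atP c d u :
  reflect [/\ proper_colouring e d, d u != c u & forall x, x != u -> d x = c x]
          (d \in recol_at e c u).
Proof.
rewrite inE; apply: (iffP and3P) => -[dP du dO]; split=> //.
  by move=> x xu; apply/eqP/(implyP (forallP dO x)).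
by apply/forallP => x; apply/implyP => xu; rewrite dO.
Qed.

Lemma eq_ffun_off d d' u :
  (forall x, x != u -> d x = d' x) -> (d == d') = (d u == d' u).
Proof.
move=> dd'; apply/eqP/eqP => [-> // | du]; apply/ffunP => x.
by have [-> // | xu] := eqVneq x u; apply: dd'.
Qed.

Lemma recol_at_recol c cu u :
  proper_colouring e c -> cu \in recol_at e c u ->
  recol_at e cu u = c |: (recol_at e c u :\ cu).
Proof.
move=> cP /recol_atP [_ cuu cuO]; apply/setP => d.
rewrite in_setU1 in_setD1; apply/recol_atP/predU1P => [[dP du dO] | ].
  have dcO x : x != u -> d x = c x by move=> xu; rewrite dO // cuO.
  have [duc | duc] := eqVneq (d u) (c u).
    by left; apply/eqP; rewrite (eq_ffun_off dcO) duc.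
  by right; rewrite (eq_ffun_off dO) du; apply/recol_atP.
case=> [-> | /andP [dcu /recol_atP [dP du dO]]].
  by split=> // [|x xu]; [rewrite eq_sym | rewrite cuO].
have dcuO x : x != u -> d x = cu x by move=> xu; rewrite dO // cuO.
by rewrite (eq_ffun_off dcuO) in dcu.
Qed.

Lemma card_recol_at_recol c cu u :
  proper_colouring e c -> cu \in recol_at e c u ->
  #|recol_at e cu u| = #|recol_at e c u|.
Proof.
move=> cP cuI; have [_ cuu _] := recol_atP _ _ _ cuI.
have cNI : c \notin recol_at e c u by apply/recol_atP => -[]; rewrite eqxx.
rewrite (recol_at_recol cP cuI) cardsU1 in_setD1 (negbTE cNI) andbF.
by rewrite [RHS](cardsD1 cu) cuI.
Qed.

Definition recolour d u (a : 'I_k) : {ffun T -> 'I_k} :=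
  [ffun x => if x == u then a else d x].

Lemma leq_card_recol_at_other c cu u v :
  symmetric e -> u != v -> ~~ e u v -> cu \in recol_at e c u ->
  #|recol_at e c v| <= #|recol_at e cu v|.
Proof.
move=> esym uv nuv /recol_atP [/proper_colouringP cuP _ cuO].
have vu : v != u by rewrite eq_sym.
pose f d := recolour d u (cu u).
have fuO d : forall x, x != u -> f d x = d x.
  by move=> x xu; rewrite ffunE (negbTE xu).
have f_inj : {in recol_at e c v &, injective f}.
  move=> d1 d2 /recol_atP [_ _ d1O] /recol_atP [_ _ d2O] fd12.
  apply/eqP; rewrite (eq_ffun_off (_ : forall x, x != u -> d1 x = d2 x)) //.
    by rewrite d1O // d2O.
  by move=> x xu; rewrite -(fuO d1 x xu) -(fuO d2 x xu) fd12.
rewrite -(card_in_imset f_inj); apply/subset_leq_card/subsetP.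
move=> _ /imsetP [d /recol_atP [/proper_colouringP dP dv dO] ->].
have fvO x : x != v -> f d x = cu x.
  move=> xv; rewrite ffunE; case: eqVneq => [-> // | xu].
  by rewrite dO // cuO.
have uNv x : e u x -> x != v by apply: contraTneq => ->.
apply/recol_atP; split=> [|| x /fvO //].
  apply/proper_colouringP => x y exy.
  have [xu | xu] := eqVneq x u; last have [yu | yu] := eqVneq y u.
  - by subst x; rewrite (fvO u uv) (fvO y (uNv y exy)); apply: cuP.
  - subst y; rewrite esym in exy.
    by rewrite (fvO u uv) (fvO x (uNv x exy)) eq_sym; apply: cuP.
  - by rewrite !fuO //; apply: dP.
by rewrite fuO // cuO.
Qed.

Lemma leq_card_recol_at c cu u v :
  symmetric e -> proper_colouring e c -> cu \in recol_at e c u -> ~~ e u v ->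
  #|recol_at e c v| <= #|recol_at e cu v|.
Proof.
move=> esym cP cuI nuv; have [<- | uv] := eqVneq u v.
  by rewrite (card_recol_at_recol cP cuI).
exact: leq_card_recol_at_other esym uv nuv cuI.
Qed.

End Recolouring.

Theorem lemma3p3 (T : finType) (e : rel T) (k : nat)
  (c : {ffun T -> 'I_k}) (u v : T) (cu cv : {ffun T -> 'I_k}) :
  simple_graph e -> 0 < k -> proper_colouring e c ->
  1 < #|recol_at e c u| -> 1 < #|recol_at e c v| ->
  cu \in recol_at e c u -> cv \in recol_at e c v ->
  ~~ e u v ->
  1 < #|recol_at e cu v| /\ 1 < #|recol_at e cv u|.
Proof.
move=> [esym _] _ cP hu hv cuI cvI nuv; split.
  exact: leq_trans hv (leq_card_recol_at esym cP cuI nuv).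
have nvu : ~~ e v u by rewrite esym.
exact: leq_trans hu (leq_card_recol_at esym cP cvI nvu).
Qed.
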